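(* Let $\mathcal{C}$ be a family of grounded curves (not necessarily $x$-monotone), where each curve $\gamma\in\mathcal{C}$ has a designated endpoint $p(\gamma)$ on the line $\{x=0\}$ and these endpoints have pairwise distinct $y$-coordinates. Let $G$ be the intersection graph of $\mathcal{C}$, and let $<$ be the total ordering of $\mathcal{C}$ according to the $y$-coordinates of the endpoints $p(\gamma)$. Then: (1) $G_<$ does not contain $M_1$ as an induced ordered subgraph; (2) if, in addition, all members of $\mathcal{C}$ are $x$-monotone, then the complement $\overline{G}_<$ (with the same ordering) does not contain the monotone path $P_4$ as an induced ordered subgraph.
   Context: A curve is the image of a continuous map $\phi:[0,1]\to\mathbb{R}^2$; it is $x$-monotone if every vertical line meets it in at most one point. A curve is grounded if one of its endpoints lies on $\{x=0\}$ and the whole curve lies in $\{x\ge0\}$. The intersection graph has the curves as vertices, adjacent iff they intersect. An ordered graph is a graph with a total order on its vertices; $H_{<'}$ is an induced ordered subgraph of $G_<$ if there is an order-preserving injection $\phi:V(H)\to V(G)$ with $uv\in E(H)\iff \phi(u)\phi(v)\in E(G)$. $M_1$ is the ordered graph on $1<2<3<4$ with edges $\{1,3\}$ and $\{2,4\}$ only. $P_4$ is the ordered graph on $v_1<v_2<v_3<v_4$ with edges $v_1v_2,v_2v_3,v_3v_4$ only. *)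

From HB Require Import structures.
From mathcomp Require Import all_boot all_order all_algebra.
From mathcomp Require Import all_classical all_reals all_analysis.
Set Implicit Arguments. Unset Strict Implicit. Unset Printing Implicit Defensive.
Import Order.TTheory GRing.Theory Num.Theory.
Import numFieldNormedType.Exports.
Local Open Scope classical_set_scope.
Local Open Scope ring_scope.

Section Curves.
Variable R : realType.

Definition I01 : set R := `[0, 1]%classic.

(* A curve is given by a parametrization phi : [0,1] -> R^2, continuous on [0,1];
   the curve itself is the image phi @` [0,1]. *)
Definition is_curve (phi : R -> R * R) : Prop :=
  {within I01, continuous phi}.

Definition curve_img (phi : R -> R * R) : set (R * R) := phi @` I01.

(* Grounded, with designated endpoint p = phi 0 on {x = 0}; the whole curve
   lies in {x >= 0}. *)
Definition grounded (phi : R -> R * R) : Prop :=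
  (phi 0).1 = 0 /\ (forall t, I01 t -> 0 <= (phi t).1).

Definition x_monotone (phi : R -> R * R) : Prop :=
  forall P Q, P \in curve_img phi -> Q \in curve_img phi -> P.1 = Q.1 -> P = Q.

Definition curves_meet (phi psi : R -> R * R) : Prop :=
  curve_img phi `&` curve_img psi !=set0.

End Curves.

Definition induced_ordered_subgraph (n : nat) (H : rel 'I_n)
  (V : Type) (lt : V -> V -> Prop) (adj : V -> V -> Prop) : Prop :=
  exists f : 'I_n -> V,
    injective f /\
    (forall i j : 'I_n, (i < j)%N -> lt (f i) (f j)) /\
    (forall i j : 'I_n, i != j -> (H i j <-> adj (f i) (f j))).

(* M_1 on 1<2<3<4 (here 0<1<2<3) with edges {1,3},{2,4} only *)
Definition M1_rel : rel 'I_4 := fun i j =>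
  [|| ((i : nat) == 0%N) && ((j : nat) == 2%N), ((i : nat) == 2%N) && ((j : nat) == 0%N),
      ((i : nat) == 1%N) && ((j : nat) == 3%N) | ((i : nat) == 3%N) && ((j : nat) == 1%N)].

Definition P4_rel : rel 'I_4 := fun i j =>
  ((i : nat) == j.+1) || ((j : nat) == i.+1).

Definition intersection_adj (R : realType) (I : Type) (c : I -> R -> R * R)
  (a b : I) : Prop := a <> b /\ curves_meet (c a) (c b).

Definition complement_adj (R : realType) (I : Type) (c : I -> R -> R * R)
  (a b : I) : Prop := a <> b /\ ~ curves_meet (c a) (c b).

Definition endpoint_lt (R : realType) (I : Type) (c : I -> R -> R * R)
  (a b : I) : Prop := ((c a 0).2 < (c b 0).2)%R.

From HB Require Import structures.
From mathcomp Require Import all_boot all_order all_algebra.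
From mathcomp Require Import all_classical all_reals all_analysis.
From mathcomp Require Import lra zify.
Set Implicit Arguments. Unset Strict Implicit. Unset Printing Implicit Defensive.
Import Order.TTheory GRing.Theory Num.Theory.
Import numFieldNormedType.Exports.
Local Open Scope classical_set_scope.
Local Open Scope ring_scope.

(** Let a, b, c be grounded curves whose endpoints on the y-axis satisfy
  p(a) < p(b) < p(c).  In the half-plane x >= 0, two sets at positive distance
  cannot join p(a) to p(c) and p(b) to a point of the axis outside [p(a), p(c)]:
  approximate both by e-chains alpha and beta, with e a quarter of the distance,
  and count the quarter turns made by alpha_i - beta_j around the grid of index
  pairs.  Every grid cell contributes nothing, but the four sides, on which one
  of the points stays on the axis, add up to a nonzero total.
  For M1 the two sets are the unions gamma_1 + gamma_3 and gamma_2 + gamma_4.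
  For the complement of P4 with x-monotone curves: if b avoids a and c, then b
  stays strictly left of every common point P of a and c.  Otherwise b reaches
  the vertical line through P, which meets a and c only at P; going along that
  line away from P and then horizontally back to the axis far outside
  [p(a), p(c)] gives the forbidden picture.  Applying this to (a, b, c) at a
  common point P of a and c, and to (b, c, d) at a common point Q of b and d,
  gives Q.x < P.x < Q.x. *)

(* Quadrants are labelled 0..3 counterclockwise starting from the positive
   x-axis; [quarter_turn q q'] is the signed number of quarter turns from q to q',
   and is 0 for antipodal labels, where the sign is ambiguous. *)
Definition quarter_turn (q q' : nat) : int :=
  match ((q' + 4 - q) %% 4)%N with 1%N => 1 | 3%N => -1 | _ => 0 end.

Definition antipodal (q q' : nat) : bool := ((q + 2) %% 4 == q')%N.

Lemma quarter_turn_square q1 q2 q3 q4 :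
  (q1 < 4)%N -> (q2 < 4)%N -> (q3 < 4)%N -> (q4 < 4)%N ->
  ~~ antipodal q1 q2 -> ~~ antipodal q1 q3 -> ~~ antipodal q1 q4 ->
  ~~ antipodal q2 q3 -> ~~ antipodal q2 q4 -> ~~ antipodal q3 q4 ->
  quarter_turn q1 q2 + quarter_turn q2 q4 = quarter_turn q1 q3 + quarter_turn q3 q4.
Proof.
by case: q1 => [|[|[|[|q1]]]] //; case: q2 => [|[|[|[|q2]]]] //;
   case: q3 => [|[|[|[|q3]]]] //; case: q4 => [|[|[|[|q4]]]].
Qed.

(* Potentials for [quarter_turn] on the half-planes x >= 0 (labels 3, 0, 1)
   and x <= 0 (labels 1, 2, 3). *)
Definition right_arg (q : nat) : int := if q == 3%N then -1 else q%:Z.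

Lemma quarter_turn_right q q' : (q < 4)%N -> (q' < 4)%N ->
  q != 2%N -> q' != 2%N -> ~~ antipodal q q' ->
  quarter_turn q q' = right_arg q' - right_arg q.
Proof. by case: q => [|[|[|[|q]]]] //; case: q' => [|[|[|[|q']]]]. Qed.

Lemma quarter_turn_left q q' : (q < 4)%N -> (q' < 4)%N ->
  q != 0%N -> q' != 0%N -> ~~ antipodal q q' ->
  quarter_turn q q' = q'%:Z - q%:Z.
Proof. by case: q => [|[|[|[|q]]]] //; case: q' => [|[|[|[|q']]]]. Qed.

Lemma grid_stokes (V : zmodType) (h v : nat -> nat -> V) (N M : nat) :
  (forall i j, (i < N)%N -> (j < M)%N -> h i j + v i.+1 j = v i j + h i j.+1) ->
  \sum_(i < N) h i 0%N + \sum_(j < M) v N j = \sum_(j < M) v 0%N j + \sum_(i < N) h i M.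
Proof.
move=> cell; pose H j := \sum_(i < N) h i j.
have row_step j : (j < M)%N -> H j.+1 - H j = v N j - v 0%N j.
  move=> jM; rewrite -sumrB -(telescope_sumr (fun i => v i j)) // big_mkord.
  apply: eq_bigr => i _; apply/eqP; rewrite subr_eq addrAC eq_sym subr_eq.
  by rewrite addrC cell // addrC.
have := telescope_sumr H (leq0n M); rewrite big_mkord.
rewrite (eq_bigr _ (fun j _ => row_step (val j) (ltn_ord j))) sumrB => Hsum.
apply/eqP; rewrite addrC -subr_eq -addrA eq_sym addrC -subr_eq.
by rewrite -opprB Hsum opprB.
Qed.

Section Quadrants.
Variable R : realDomainType.
Implicit Types (u v : R * R) (y : R).

(* Half-open quadrants, so that every nonzero vector lies in exactly one; the
   origin gets label 3. *)
Definition quadrant u : nat :=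
  if (0 < u.1) && (0 <= u.2) then 0 else if (u.1 <= 0) && (0 < u.2) then 1
  else if (u.1 < 0) && (u.2 <= 0) then 2 else 3.

Lemma quadrant_lt4 u : (quadrant u < 4)%N.
Proof. by rewrite /quadrant; repeat case: ifP. Qed.

Lemma quadrantP u :
  [/\ quadrant u = 0%N -> 0 < u.1 /\ 0 <= u.2, quadrant u = 1%N -> u.1 <= 0 /\ 0 < u.2,
      quadrant u = 2%N -> u.1 < 0 /\ u.2 <= 0 & quadrant u = 3%N -> 0 <= u.1 /\ u.2 <= 0].
Proof.
rewrite /quadrant; case: ifPn => [/andP[-> ->] //|h0].
case: ifPn => [/andP[-> ->] //|h1]; case: ifPn => [/andP[-> ->] //|h2].
split=> // _; move: h0 h1 h2; rewrite !negb_and -!ltNge -!leNgt.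
case: (ltrP u.1 0); case: (ltrP 0 u.2) => //=; lra.
Qed.

Definition dotp u v := u.1 * v.1 + u.2 * v.2.

Lemma quadrant_not_antipodal u v : 0 < dotp u v -> ~~ antipodal (quadrant u) (quadrant v).
Proof.
rewrite /dotp => uv; have := quadrant_lt4 u; have := quadrant_lt4 v.
have [U0 U1 U2 U3] := quadrantP u; have [V0 V1 V2 V3] := quadrantP v.
case: (quadrant u) U0 U1 U2 U3 => [|[|[|[|?]]]] U0 U1 U2 U3;
case: (quadrant v) V0 V1 V2 V3 => [|[|[|[|?]]]] V0 V1 V2 V3 //= _ _.
- by have [] := U0 erefl; have [] := V2 erefl; nra.
- by have [] := U1 erefl; have [] := V3 erefl; nra.
- by have [] := U2 erefl; have [] := V0 erefl; nra.
- by have [] := U3 erefl; have [] := V1 erefl; nra.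
Qed.

Lemma quadrant_axis_pos y : 0 < y -> quadrant (0, y) = 1%N.
Proof. by move=> y0; rewrite /quadrant ltxx lexx y0. Qed.

Lemma quadrant_axis_neg y : y < 0 -> quadrant (0, y) = 3%N.
Proof. by move=> y0; rewrite /quadrant ltxx lexx /= (lt_gtF y0). Qed.

Lemma quadrant_neq2 u : 0 <= u.1 -> quadrant u != 2%N.
Proof. by move=> u0; have [_ _ h _] := quadrantP u; apply/eqP => /h []; lra. Qed.

Lemma quadrant_neq0 u : u.1 <= 0 -> quadrant u != 0%N.
Proof. by move=> u0; have [h _ _ _] := quadrantP u; apply/eqP => /h []; lra. Qed.

End Quadrants.

Definition near_index (i i' : nat) : bool := (i' <= i.+1)%N && (i <= i'.+1)%N.

Lemma interleaved_walks_antipodal (R : realDomainType) (al be : nat -> R * R)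
    (N M : nat) (ya yb yc ye : R) :
  al 0%N = (0, ya) -> al N = (0, yc) -> be 0%N = (0, yb) -> be M = (0, ye) ->
  ya < yb -> yb < yc -> ye < ya \/ yc < ye ->
  (forall i, (i <= N)%N -> 0 <= (al i).1) -> (forall j, (j <= M)%N -> 0 <= (be j).1) ->
  (forall i i' j j', (i <= N)%N -> (i' <= N)%N -> (j <= M)%N -> (j' <= M)%N ->
     near_index i i' -> near_index j j' ->
     ~~ antipodal (quadrant (al i - be j)) (quadrant (al i' - be j'))) -> False.
Proof.
move=> al0 alN be0 beM ab bc hye alx bex; rewrite /near_index => not_antipodal.
pose q i j := quadrant (al i - be j).
have q4 i j : (q i j < 4)%N by apply: quadrant_lt4.
pose h i j := quarter_turn (q i j) (q i.+1 j).
pose v i j := quarter_turn (q i j) (q i j.+1).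
have cell i j : (i < N)%N -> (j < M)%N -> h i j + v i.+1 j = v i j + h i j.+1.
  by move=> iN jM; apply: quarter_turn_square => //; apply: not_antipodal; lia.
have hside j : (j <= M)%N -> (be j).1 = 0 ->
    \sum_(i < N) h i j = right_arg (q N j) - right_arg (q 0%N j).
  move=> jM bej; rewrite -(big_mkord xpredT (h^~ j)).
  apply: (telescope_sumr_eq (fun i => right_arg (q i j))) => // i /= iN.
  have q_neq2 k : (k <= N)%N -> q k j != 2%N.
    by move=> kN; apply: quadrant_neq2; rewrite /= bej subr0 alx.
  by apply: quarter_turn_right => //; [apply: q_neq2 | apply: q_neq2 | apply: not_antipodal]; lia.
have vside i : (i <= N)%N -> (al i).1 = 0 ->
    \sum_(j < M) v i j = (q i M)%:Z - (q i 0%N)%:Z.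
  move=> iN ali; rewrite -(big_mkord xpredT (v i)).
  apply: (telescope_sumr_eq (fun j => (q i j)%:Z)) => // j /= jM.
  have q_neq0 k : (k <= M)%N -> q i k != 0%N.
    by move=> kM; apply: quadrant_neq0; rewrite /= ali sub0r oppr_le0 bex.
  by apply: quarter_turn_left => //; [apply: q_neq0 | apply: q_neq0 | apply: not_antipodal]; lia.
have := grid_stokes cell.
rewrite (hside 0%N) ?be0 // (hside M) ?beM // (vside 0%N) ?al0 // (vside N) ?alN //.
have axis y y' : quadrant ((0, y) - (0, y')) = quadrant (0, y - y').
  by congr quadrant; apply/pair_equal_spec; rewrite /= subr0.
rewrite /q al0 alN be0 beM !axis (@quadrant_axis_neg _ (ya - yb)) ?subr_lt0 //.
rewrite (@quadrant_axis_pos _ (yc - yb)) ?subr_gt0 //.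
case: hye => hye.
  by rewrite !quadrant_axis_pos // subr_gt0 // (lt_trans hye) // (lt_trans ab).
by rewrite !quadrant_axis_neg // subr_lt0 // (lt_trans _ hye) // (lt_trans ab).
Qed.

Section Chains.
Variables (R : realType) (V : normedModType R).
Implicit Types (e : R) (K L : set V) (x y z : V).
Local Notation I01 := (@I01 R).

Definition chain e K x y : Prop := exists s : seq V,
  [/\ path (fun a b => `|a - b| < e) x s, last x s = y & {in x :: s, forall a, K a}].

Definition chained K x y : Prop := forall e, 0 < e -> chain e K x y.

Lemma chain_refl e K x : K x -> chain e K x x.
Proof. by move=> Kx; exists [::]; split=> // a; rewrite inE => /eqP ->. Qed.

Lemma chain_rcons e K x y z : chain e K x y -> K z -> `|y - z| < e -> chain e K x z.
Proof.
move=> [s [sp sl sK]] Kz yz; exists (rcons s z); split.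
- by rewrite rcons_path sp sl.
- by rewrite last_rcons.
- by move=> a; rewrite -rcons_cons mem_rcons inE => /predU1P [->|/sK].
Qed.

Lemma chain_cat e K x y z : chain e K x y -> chain e K y z -> chain e K x z.
Proof.
move=> [s [sp sl sK]] [t [tp tl tK]]; exists (s ++ t); split.
- by rewrite cat_path sp sl.
- by rewrite last_cat sl.
- move=> a; rewrite -cat_cons mem_cat => /orP [/sK //|ta]; apply: tK.
  by rewrite inE ta orbT.
Qed.

Lemma chain_rev e K x y : chain e K x y -> chain e K y x.
Proof.
move=> [s [sp sl sK]]; exists (rev (belast x s)).
have rev_xs : y :: rev (belast x s) = rev (x :: s) by rewrite [x :: s]lastI sl rev_rcons.
split.
- rewrite -sl rev_path; apply: sub_path sp => a b; by rewrite distrC.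
- by rewrite -[LHS]/(last x (y :: rev (belast x s))) rev_xs rev_cons last_rcons.
- by move=> a; rewrite rev_xs mem_rev; apply: sK.
Qed.

Lemma chain_sub e K L x y : K `<=` L -> chain e K x y -> chain e L x y.
Proof. by move=> KL [s [sp sl sK]]; exists s; split=> // a /sK /KL. Qed.

Lemma chained_trans K x y z : chained K x y -> chained K y z -> chained K x z.
Proof. by move=> xy yz e e0; apply: chain_cat (xy e e0) (yz e e0). Qed.

Lemma chained_sym K x y : chained K x y -> chained K y x.
Proof. by move=> xy e e0; apply: chain_rev (xy e e0). Qed.

Lemma chained_sub K L x y : K `<=` L -> chained K x y -> chained L x y.
Proof. by move=> KL xy e e0; apply: chain_sub KL (xy e e0). Qed.

Lemma chain_nth e K x y : 0 < e -> chain e K x y -> exists N (f : nat -> V),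
  [/\ f 0%N = x, f N = y, forall i, (i <= N)%N -> K (f i)
    & forall i i', (i <= N)%N -> (i' <= N)%N -> near_index i i' -> `|f i - f i'| < e].
Proof.
move=> e0 [s [sp sl sK]]; exists (size s), (nth x (x :: s)); split=> //.
- by rewrite -sl -[size s]/((size (x :: s)).-1) nth_last.
- by move=> i iN; apply/sK/mem_nth.
have /(pathP x) step := sp.
move=> i i' iN i'N /andP [i'i ii'].
have : i' = i \/ i' = i.+1 \/ i = i'.+1 by lia.
case=> [|[|]] E; subst.
- by rewrite subrr normr0.
- exact: step i'N.
- by rewrite distrC; apply: step iN.
Qed.

Lemma I01P (t : R) : I01 t <-> 0 <= t <= 1.
Proof. by rewrite /I01 /= in_itv. Qed.

Lemma I01_0 : I01 0.
Proof. by apply/I01P; rewrite lexx ler01. Qed.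

Lemma I01_1 : I01 1.
Proof. by apply/I01P; rewrite lexx ler01. Qed.

Lemma continuous_within_dist (A : set R) (phi : R -> V) t e :
  {within A, continuous phi} -> A t -> 0 < e ->
  exists2 d : R, 0 < d & forall s, A s -> `|s - t| < d -> `|phi t - phi s| < e.
Proof.
move=> cphi At e0; have /cvgrPdist_lt /(_ e e0) := cphi t.
rewrite {1}/nbhs /= -(nbhs_subspace_in At) /within /= => /nbhs_ballP [d d0 hd].
by exists d => // s As ts; apply: hd As; rewrite /ball /= distrC.
Qed.

Lemma chained_along (phi : R -> V) T : {within I01, continuous phi} -> I01 T ->
  chained (phi @` I01) (phi 0) (phi T).
Proof.
move=> cphi /I01P /andP [T0 T1] e e0.
have Iin s : 0 <= s <= T -> I01 s.
  by move=> /andP [s0 sT]; apply/I01P; rewrite s0 (le_trans sT T1).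
pose S := [set s | 0 <= s <= T /\ chain e (phi @` I01) (phi 0) (phi s)].
have S0 : S 0 by split; [rewrite lexx T0 | apply: chain_refl; exists 0 => //; apply: I01_0].
have hS : has_sup S by split; [exists 0 | exists T => s [/andP []]].
set sg := sup S.
have sgT : 0 <= sg <= T.
  by rewrite (sup_upper_bound hS S0) ge_sup //; [case: hS | move=> s [/andP []]].
have e2 : 0 < e / 2 by rewrite divr_gt0.
have [d d0 hd] := continuous_within_dist cphi (Iin _ sgT) e2.
have [s0 [s0T ch0] sgs0] := sup_adherent d0 hS; rewrite -/sg in sgs0.
have s0sg : s0 <= sg by apply: sup_upper_bound.
have reach t : 0 <= t -> t <= T -> `|t - sg| < d -> S t.
  move=> t0 tT' tsg; have tT : 0 <= t <= T by rewrite t0.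
  split=> //; apply: (chain_rcons ch0); first by exists t => //; apply: Iin.
  rewrite -(subrK (phi sg) (phi s0)) -addrA (splitr e); apply: le_lt_trans (ler_normD _ _) _.
  apply: ltrD; last exact: hd _ (Iin _ tT) tsg.
  by rewrite distrC; apply: hd (Iin _ s0T) _; rewrite ler0_norm ?subr_le0 // opprB; lra.
have /andP [sg0 sgT'] := sgT.
have [sgd|Tsgd] := leP (sg + d / 2) T.
  have /(sup_upper_bound hS) : S (sg + d / 2).
    by apply: reach; rewrite ?ger0_norm; lra.
  rewrite -/sg; lra.
suff [] : S T by [].
by apply: reach; rewrite ?ger0_norm; lra.
Qed.

Definition separated K L : Prop :=
  exists2 m : R, 0 < m & forall x y, K x -> L y -> m <= `|x - y|.

Lemma separatedUl K1 K2 L : separated K1 L -> separated K2 L -> separated (K1 `|` K2) L.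
Proof.
move=> [m1 m10 h1] [m2 m20 h2]; exists (Num.min m1 m2); first by rewrite lt_min m10 m20.
by move=> x y [Kx|Kx] Ly; rewrite ge_min; [rewrite h1 | rewrite h2 ?orbT].
Qed.

Lemma separatedUr K L1 L2 : separated K L1 -> separated K L2 -> separated K (L1 `|` L2).
Proof.
move=> [m1 m10 h1] [m2 m20 h2]; exists (Num.min m1 m2); first by rewrite lt_min m10 m20.
by move=> x y Kx [Ly|Ly]; rewrite ge_min; [rewrite h1 | rewrite h2 ?orbT].
Qed.

Lemma separated_compact K L : compact K -> compact L -> K `&` L = set0 -> separated K L.
Proof.
move=> cK cL KL; have [[z KLz]|] := pselect ((K `*` L) !=set0); last first.
  by move=> KL0; exists 1 => // x y Kx Ly; case: KL0; exists (x, y).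
have dist_cont : {within K `*` L, continuous (fun z : V * V => `|z.1 - z.2|)}.
  apply: continuous_subspaceT => w.
  exact: continuous_comp (@sub_continuous V w) (@norm_continuous _ V _).
have [w /set_mem [Kw Lw] wmin] := compact_EVT_min (ex_intro _ z KLz) (compact_setX cK cL) dist_cont.
exists `|w.1 - w.2|.
  rewrite normr_gt0 subr_eq0; apply/eqP => w12.
  have : (K `&` L) w.1 by split; rewrite // w12.
  by rewrite KL.
by move=> x y Kx Ly; apply: (wmin (x, y)); rewrite inE.
Qed.

Lemma compact_norm_lt K : compact K -> exists M : R, forall x, K x -> `|x| < M.
Proof.
move=> /compact_bounded [M [_ hM]]; exists (M + 2) => x Kx.
by apply: le_lt_trans (hM (M + 1) _ x Kx) _; rewrite ?ltrD2l ?ltrDl ?ltr1n.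
Qed.
End Chains.

Section Plane.
Variable R : realType.
Implicit Types (phi psi a b c d : R -> R * R) (P Q : R * R) (K L : set (R * R)).
Local Notation I01 := (@I01 R).

Definition right_half_plane : set (R * R) := [set P | 0 <= P.1].

Lemma curve_compact phi : is_curve phi -> compact (curve_img phi).
Proof. by move=> cphi; apply: continuous_compact => //; apply: segment_compact. Qed.

Lemma grounded_right phi : grounded phi -> curve_img phi `<=` right_half_plane.
Proof. by case=> _ h _ [s Is <-]; apply: h. Qed.

Lemma grounded_start phi : grounded phi -> phi 0 = (0, (phi 0).2).
Proof. by case; case: (phi 0) => x y /= ->. Qed.

Lemma separated_curves phi psi : is_curve phi -> is_curve psi ->
  ~ curves_meet phi psi -> separated (curve_img phi) (curve_img psi).
Proof.
move=> cphi cpsi nmeet; apply: separated_compact; try exact: curve_compact.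
by rewrite -subset0 => P IP; apply: nmeet; exists P.
Qed.

Lemma chained_meeting_curves phi psi : is_curve phi -> is_curve psi -> curves_meet phi psi ->
  chained (curve_img phi `|` curve_img psi) (phi 0) (psi 0).
Proof.
move=> cphi cpsi [_ [[s Is <-] [t It E]]].
apply: (chained_trans (y := phi s)).
  by apply: chained_sub (chained_along cphi Is) => ? ?; left.
rewrite -E; apply: chained_sym; by apply: chained_sub (chained_along cpsi It) => ? ?; right.
Qed.

Lemma dotp_gt0 (u v : R * R) (m : R) : 0 < m -> m <= `|u| -> `|u - v| < m / 2 -> 0 < dotp u v.
Proof.
rewrite !prod_normE /dotp /= => m0; move: (u.1) (u.2) (v.1) (v.2) => a b c d.
rewrite le_max gt_max => /orP h /andP []; rewrite !ltr_norml => /andP [h1 h2] /andP [h3 h4].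
by case: h; rewrite ler_normr => /orP [] h; nra.
Qed.

Lemma interleaved_chained_not_separated KA KB (ya yb yc ye : R) :
  KA `<=` right_half_plane -> KB `<=` right_half_plane ->
  chained KA (0, ya) (0, yc) -> chained KB (0, yb) (0, ye) ->
  ya < yb -> yb < yc -> ye < ya \/ yc < ye -> ~ separated KA KB.
Proof.
move=> KAr KBr chA chB ab bc hye [m m0 hm]; have m4 : 0 < m / 4 by rewrite divr_gt0.
have [N [al [al0 alN alK alnear]]] := chain_nth m4 (chA _ m4).
have [M [be [be0 beM beK benear]]] := chain_nth m4 (chB _ m4).
apply: (interleaved_walks_antipodal al0 alN be0 beM ab bc hye).
- by move=> i /alK /KAr.
- by move=> j /beK /KBr.
move=> i i' j j' iN i'N jM j'M ii' jj'; apply: quadrant_not_antipodal.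
apply: (dotp_gt0 m0 (hm _ _ (alK i iN) (beK j jM))).
have -> : al i - be j - (al i' - be j') = (al i - al i') - (be j - be j').
  by rewrite !opprD addrACA.
have -> : m / 2 = m / 4 + m / 4 by lra.
apply: le_lt_trans (ler_normB _ _) _.
exact: ltrD (alnear _ _ iN i'N ii') (benear _ _ jM j'M jj').
Qed.

Lemma curves_meetC phi psi : curves_meet phi psi -> curves_meet psi phi.
Proof. by case=> P [] *; exists P. Qed.

Lemma no_grounded_M1 a b c d :
  is_curve a -> is_curve b -> is_curve c -> is_curve d ->
  grounded a -> grounded b -> grounded c -> grounded d ->
  (a 0).2 < (b 0).2 -> (b 0).2 < (c 0).2 -> (c 0).2 < (d 0).2 ->
  curves_meet a c -> curves_meet b d ->
  ~ curves_meet a b -> ~ curves_meet a d -> ~ curves_meet b c -> ~ curves_meet c d -> False.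
Proof.
move=> ca cb cc cd ga gb gc gd ab bc cd' ac bd nab nad nbc ncd.
have ncb : ~ curves_meet c b by move/curves_meetC.
apply: (@interleaved_chained_not_separated (curve_img a `|` curve_img c)
  (curve_img b `|` curve_img d) (a 0).2 (b 0).2 (c 0).2 (d 0).2) => //; last first.
- by apply: separatedUl; apply: separatedUr; apply: separated_curves.
- by right.
- by rewrite -(grounded_start gb) -(grounded_start gd); apply: chained_meeting_curves.
- by rewrite -(grounded_start ga) -(grounded_start gc); apply: chained_meeting_curves.
- by move=> P []; apply: grounded_right.
- by move=> P []; apply: grounded_right.
Qed.

Definition linepath P Q (s : R) : R * R := P + s *: (Q - P).

Lemma linepathE P Q s :
  linepath P Q s = (P.1 + s * (Q.1 - P.1), P.2 + s * (Q.2 - P.2)).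
Proof. by []. Qed.

Lemma linepath_curve P Q : is_curve (linepath P Q).
Proof.
apply: continuous_subspaceT => s.
have -> : linepath P Q = (fun=> P) + (fun s => s *: (Q - P)) by [].
apply: continuousD; first exact: cst_continuous.
by apply: continuousZ => //; exact: cst_continuous.
Qed.

Lemma linepath0 P Q : linepath P Q 0 = P.
Proof. by rewrite /linepath scale0r addr0. Qed.

Lemma linepath1 P Q : linepath P Q 1 = Q.
Proof. by rewrite /linepath scale1r addrC subrK. Qed.

Lemma chained_linepath P Q : chained (curve_img (linepath P Q)) P Q.
Proof. by have := chained_along (@linepath_curve P Q) (I01_1 R); rewrite linepath0 linepath1. Qed.

Lemma linepath_right P Q : right_half_plane P -> right_half_plane Q ->
  curve_img (linepath P Q) `<=` right_half_plane.
Proof.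
rewrite /right_half_plane /= => P0 Q0 _ [s /I01P /andP [s0 s1] <-].
rewrite linepathE /=; nra.
Qed.

Lemma vertical_linepath_miss phi P Q Q' : x_monotone phi -> curve_img phi P ->
  Q.1 = P.1 -> Q'.1 = P.1 -> ~ curve_img (linepath Q Q') P -> ~ curves_meet phi (linepath Q Q').
Proof.
move=> xm phiP QP Q'P nP [Z [phiZ [s Is Zs]]]; apply: nP; exists s => //.
by rewrite Zs; apply: xm; rewrite ?inE // -Zs linepathE /= QP Q'P subrr mulr0 addr0.
Qed.

Lemma horizontal_linepath_miss phi Q Q' : Q.2 = Q'.2 ->
  (forall s, I01 s -> `|phi s| < `|Q.2|) -> ~ curves_meet phi (linepath Q Q').
Proof.
move=> QQ' small [Z [[s Is <-] [r Ir E]]]; have := small s Is.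
by rewrite -E linepathE prod_normE /= QQ' subrr mulr0 addr0 gt_max ltxx andbF.
Qed.

Lemma curve_reaches_x phi t x : is_curve phi -> I01 t ->
  (phi 0).1 <= x <= (phi t).1 -> exists2 s, I01 s & (phi s).1 = x.
Proof.
move=> cphi /I01P /andP [t0 t1] x0t.
have sub01 : `[0, t] `<=` I01.
  by move=> s; rewrite /= in_itv /= => /andP [s0 st]; apply/I01P; rewrite s0 (le_trans st t1).
have cx : {within `[0, t], continuous (fun s => (phi s).1)}.
  apply: continuous_subspaceW sub01 _ => s.
  by apply: continuous_comp; [exact: cphi | exact: cvg_fst].
have [|s s0t sx] := IVT (v := x) t0 cx.
  by case/andP: x0t => h1 h2; rewrite ge_min h1 le_max h2 orbT.
by exists s => //; apply: sub01.
Qed.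

(* The escape route: along the vertical line through P, away from P, up to a
   height beyond a, c and B, then horizontally back to the axis. *)
Lemma monotone_pair_escape a c P Q (B : R) :
  is_curve a -> is_curve c -> x_monotone a -> x_monotone c ->
  curve_img a P -> curve_img c P -> right_half_plane P -> Q.1 = P.1 -> Q.2 != P.2 ->
  exists y L, [/\ B < `|y|, L `<=` right_half_plane, chained L Q (0, y)
    & separated (curve_img a `|` curve_img c) L].
Proof.
move=> ca cc xa xc aP cP P0 QP1 QP2.
have [Ma hMa] := compact_norm_lt (curve_compact ca).
have [Mc hMc] := compact_norm_lt (curve_compact cc).
pose M := Num.max (Num.max Ma Mc) (Num.max B `|Q.2|).
have [MaM McM BM] : [/\ Ma <= M, Mc <= M & B <= M] by rewrite !le_max !lexx !orbT.
have /andP [QM1 QM2] : - M <= Q.2 <= M by rewrite -ler_norml !le_max lexx !orbT.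
pose y := if Q.2 < P.2 then - (M + 1) else M + 1.
have normy : `|y| = M + 1 by rewrite /y; case: ifP; rewrite ?normrN gtr0_norm //; lra.
pose V := linepath Q (P.1, y); pose H := linepath (P.1, y) (0, y).
have missV phi : x_monotone phi -> curve_img phi P -> ~ curves_meet phi V.
  move=> xphi phiP; apply: (vertical_linepath_miss xphi phiP) => //.
  move=> [s /I01P /andP [s0 s1]] /(congr1 snd); rewrite linepathE /= /y.
  case: ifP => QP E; first nra.
  have : P.2 < Q.2 by rewrite lt_neqAle eq_sym QP2 leNgt QP.
  nra.
have missH phi Mphi : (forall Z, curve_img phi Z -> `|Z| < Mphi) -> Mphi <= M ->
    ~ curves_meet phi H.
  move=> small MphiM; apply: horizontal_linepath_miss => // s Is.
  by rewrite normy; apply: lt_le_trans (small _ (ex_intro2 _ _ s Is erefl)) _; lra.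
exists y, (curve_img V `|` curve_img H); split.
- lra.
- by move=> Z []; apply: linepath_right; rewrite /right_half_plane //= ?QP1 // lexx.
- apply: (chained_trans (y := (P.1, y))).
    by apply: chained_sub (chained_linepath _ _) => Z; left.
  by apply: chained_sub (chained_linepath _ _) => Z; right.
- apply: separatedUl; apply: separatedUr; apply: separated_curves => //; try exact: linepath_curve.
  + exact: missV.
  + exact: missH hMa MaM.
  + exact: missV.
  + exact: missH hMc McM.
Qed.

Lemma left_of_monotone_meet a b c P t :
  is_curve a -> is_curve b -> is_curve c -> grounded a -> grounded b -> grounded c ->
  x_monotone a -> x_monotone c -> (a 0).2 < (b 0).2 -> (b 0).2 < (c 0).2 ->
  ~ curves_meet a b -> ~ curves_meet b c -> curve_img a P -> curve_img c P -> I01 t ->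
  (b t).1 < P.1.
Proof.
move=> ca cb cc ga gb gc xa xc ab bc nab nbc aP cP It; rewrite ltNge; apply/negP => Pbt.
have P0 : right_half_plane P := grounded_right ga aP.
have [s Is bsP] : exists2 s, I01 s & (b s).1 = P.1.
  by apply: (curve_reaches_x cb It); apply/andP; split=> //; case: gb => ->.
have bsP2 : (b s).2 != P.2.
  apply: contra_notN nab => /eqP bsP2; exists P; split=> //; exists s => //.
  by rewrite [b s]surjective_pairing bsP bsP2 -surjective_pairing.
have [y [L [By Lr chL sepL]]] := monotone_pair_escape
  (Num.max `|(a 0).2| `|(c 0).2|) ca cc xa xc aP cP P0 bsP bsP2.
apply: (@interleaved_chained_not_separated (curve_img a `|` curve_img c)
  (curve_img b `|` L) (a 0).2 (b 0).2 (c 0).2 y) => //.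
- by move=> Z []; apply: grounded_right.
- by move=> Z [/(grounded_right gb)|/Lr].
- rewrite -(grounded_start ga) -(grounded_start gc); apply: chained_meeting_curves => //.
  by exists P.
- rewrite -(grounded_start gb); apply: (chained_trans (y := b s)).
    by apply: chained_sub (chained_along cb Is) => Z; left.
  by apply: chained_sub chL => Z; right.
- move: By; rewrite gt_max => /andP [ay cy].
  have := ler_norm (- (a 0).2); have := ler_norm (c 0).2; rewrite normrN => ca0 ac0.
  case: (ltrP y 0) => y0;
    [left; rewrite (ltr0_norm y0) in ay | right; rewrite (ger0_norm y0) in cy]; lra.
- apply: separatedUr sepL; apply: separatedUl; apply: separated_curves => //.
  by move/curves_meetC.
Qed.

Lemma no_grounded_monotone_coP4 a b c d :
  is_curve a -> is_curve b -> is_curve c -> is_curve d ->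
  grounded a -> grounded b -> grounded c -> grounded d ->
  x_monotone a -> x_monotone b -> x_monotone c -> x_monotone d ->
  (a 0).2 < (b 0).2 -> (b 0).2 < (c 0).2 -> (c 0).2 < (d 0).2 ->
  ~ curves_meet a b -> ~ curves_meet b c -> ~ curves_meet c d ->
  curves_meet a c -> curves_meet b d -> False.
Proof.
move=> ca cb cc cd ga gb gc gd xa xb xc xd ab bc cd' nab nbc ncd [P [aP cP]] [Q [bQ dQ]].
have left_of_P := left_of_monotone_meet ca cb cc ga gb gc xa xc ab bc nab nbc aP cP.
have left_of_Q := left_of_monotone_meet cb cc cd gb gc gd xb xd bc cd' nbc ncd bQ dQ.
case: bQ cP => s Is bsQ [t It ctP].
by have := left_of_P s Is; have := left_of_Q t It; rewrite -bsQ ctP; lra.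
Qed.
End Plane.

Local Notation vertex k := (@Ordinal 4 k isT).

Theorem lemma8 (R : realType) (I : Type) (c : I -> R -> R * R)
  (Hcurve : forall a, is_curve (c a))
  (Hground : forall a, grounded (c a))
  (Hdistinct : forall a b, a <> b -> (c a 0%R).2 <> (c b 0%R).2) :
  ~ induced_ordered_subgraph M1_rel (endpoint_lt c) (intersection_adj c) /\
  ((forall a, x_monotone (c a)) ->
   ~ induced_ordered_subgraph P4_rel (endpoint_lt c) (complement_adj c)).
Proof.
have f_neq (f : 'I_4 -> I) i j : injective f -> i != j -> f i <> f j.
  by move=> f_inj ij /f_inj /eqP; rewrite (negbTE ij).
rewrite /endpoint_lt; split=> [|xm] [f [f_inj [f_lt f_adj]]].
  have meet i j : i != j -> M1_rel i j -> curves_meet (c (f i)) (c (f j)).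
    by move=> ij /(f_adj _ _ ij) [].
  have miss i j : i != j -> ~~ M1_rel i j -> ~ curves_meet (c (f i)) (c (f j)).
    by move=> ij /negP nH m; apply/nH/(f_adj _ _ ij); split=> //; apply: f_neq.
  apply: (no_grounded_M1 (Hcurve (f (vertex 0))) (Hcurve (f (vertex 1)))
    (Hcurve (f (vertex 2))) (Hcurve (f (vertex 3))) (Hground _) (Hground _) (Hground _)
    (Hground _)); by [apply: f_lt | apply: meet | apply: miss].
have meet i j : i != j -> ~~ P4_rel i j -> curves_meet (c (f i)) (c (f j)).
  move=> ij /negP nH; apply: contrapT => m.
  by apply/nH/(f_adj _ _ ij); split=> //; apply: f_neq.
have miss i j : i != j -> P4_rel i j -> ~ curves_meet (c (f i)) (c (f j)).
  by move=> ij /(f_adj _ _ ij) [].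
apply: (no_grounded_monotone_coP4 (Hcurve (f (vertex 0))) (Hcurve (f (vertex 1)))
  (Hcurve (f (vertex 2))) (Hcurve (f (vertex 3))) (Hground _) (Hground _) (Hground _)
  (Hground _) (xm _) (xm _) (xm _) (xm _)); by [apply: f_lt | apply: meet | apply: miss].
Qed.
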